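(* For a finite word $\alpha=(a_0,\ldots,a_{L-1})$ of positive integers let $K(\alpha)=\sum_i a_i$, $C(\alpha)=\sum_{j=0}^{L-1}3^{L-1-j}2^{a_0+\cdots+a_{j-1}}$ and $D(\alpha)=2^{K(\alpha)}-3^{L}$, with the convention $C(\emptyset)=0$, $D(\emptyset)=2^0-3^0=0$ for the empty word. Let $\tau$ be a word of length $p\ge 1$, let $q\ge 1$, let $\eta$ be a (possibly empty) word of length $t\ge 0$, and let $\sigma=\tau^q\eta$ (concatenation of $q$ copies of $\tau$ followed by $\eta$), of length $\ell=qp+t$. Writing $K_p=K(\tau)$, $C_p=C(\tau)$, $D_p=D(\tau)$, $C_\ell=C(\sigma)$, $D=D(\sigma)$, $C_\eta=C(\eta)$, $D_\eta=D(\eta)$, one has $$C_\ell D_p-C_p D=2^{qK_p}\bigl(C_\eta D_p-C_p D_\eta\bigr).$$ *)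

From mathcomp Require Import all_boot all_order all_algebra.
Set Implicit Arguments. Unset Strict Implicit. Unset Printing Implicit Defensive.
Import Order.TTheory GRing.Theory Num.Theory.
Local Open Scope ring_scope.

(* A word is a finite sequence of natural numbers (positivity is a hypothesis). *)
Definition Kw (a : seq nat) : nat := (\sum_(x <- a) x)%N.

Definition Cw (a : seq nat) : int :=
  \sum_(j < size a) (3 ^+ (size a - 1 - j)%N * 2 ^+ Kw (take j a)).

Definition Dw (a : seq nat) : int := 2 ^+ Kw a - 3 ^+ size a.

Definition wpow (tau : seq nat) (q : nat) : seq nat := flatten (nseq q tau).

From mathcomp Require Import all_boot all_order all_algebra.
From mathcomp Require Import ring.
Import Order.TTheory GRing.Theory Num.Theory.
Local Open Scope ring_scope.

(* C and D obey the same concatenation law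
     X(a b) = 3^|b| X(a) + 2^K(a) X(b),
   so in C(tau b) D(tau) - C(tau) D(tau b) the 3^|b| terms cancel and a factor
   2^K(tau) is peeled off; iterating q times over tau^q eta gives the identity. *)

Lemma Kw_cons x s : Kw (x :: s) = (x + Kw s)%N.
Proof. by rewrite /Kw big_cons. Qed.

Lemma Kw_cat a b : Kw (a ++ b) = (Kw a + Kw b)%N.
Proof. by rewrite /Kw big_cat. Qed.

Lemma Cw_nil : Cw [::] = 0.
Proof. by rewrite /Cw big_ord0. Qed.

Lemma Cw_cons x s : Cw (x :: s) = 3 ^+ size s + 2 ^+ x * Cw s.
Proof.
rewrite /Cw big_ord_recl /= subn1 subn0 /Kw big_nil expr0 mulr1 mulr_sumr.
congr (_ + _); apply: eq_bigr => j _.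
by rewrite /bump add0n -/(Kw _) Kw_cons exprD mulrCA subnDA.
Qed.

Lemma Cw_cat a b : Cw (a ++ b) = 3 ^+ size b * Cw a + 2 ^+ Kw a * Cw b.
Proof.
elim: a => [|x a IH] /=.
  by rewrite Cw_nil mulr0 add0r /Kw big_nil expr0 mul1r.
by rewrite !Cw_cons IH Kw_cons size_cat !exprD; ring.
Qed.

Lemma Dw_cat a b : Dw (a ++ b) = 3 ^+ size b * Dw a + 2 ^+ Kw a * Dw b.
Proof. by rewrite /Dw Kw_cat size_cat !exprD; ring. Qed.

Lemma CwDw_cross_catl tau b :
  Cw (tau ++ b) * Dw tau - Cw tau * Dw (tau ++ b) =
  2 ^+ Kw tau * (Cw b * Dw tau - Cw tau * Dw b).
Proof. by rewrite Cw_cat Dw_cat; ring. Qed.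

Lemma CwDw_cross_wpow tau eta q :
  Cw (wpow tau q ++ eta) * Dw tau - Cw tau * Dw (wpow tau q ++ eta) =
  2 ^+ (q * Kw tau)%N * (Cw eta * Dw tau - Cw tau * Dw eta).
Proof.
elim: q => [|q IH]; first by rewrite mul0n expr0 mul1r.
by rewrite /wpow /= -catA CwDw_cross_catl IH mulSn exprD mulrA.
Qed.

Theorem mainTheorem20 (tau eta : seq nat) (q : nat)
  (Htau : all (fun x => 0 < x)%N tau) (Heta : all (fun x => 0 < x)%N eta)
  (Hp : (1 <= size tau)%N) (Hq : (1 <= q)%N) :
  let sigma := wpow tau q ++ eta in
  Cw sigma * Dw tau - Cw tau * Dw sigma =
  2 ^+ (q * Kw tau)%N * (Cw eta * Dw tau - Cw tau * Dw eta).
Proof. exact: CwDw_cross_wpow. Qed.
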